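(* Let $k,\ell \ge 2$ and $n \geq k+\ell$. Let $\mathcal F \subset \binom{[n]}{k}$ and $\mathcal G \subset \binom{[n]}{\ell}$ be cross-intersecting and saturated in the sense that every $k$-set meeting all members of $\mathcal G$ belongs to $\mathcal F$ and every $\ell$-set meeting all members of $\mathcal F$ belongs to $\mathcal G$. For a family $\mathcal H$ let $\mathcal T_2(\mathcal H) = \{\{i,j\} \in \binom{[n]}{2} : H \cap \{i,j\} \neq \emptyset \text{ for all } H \in \mathcal H\}$. Then $\mathcal T_2(\mathcal F)$ and $\mathcal T_2(\mathcal G)$ are cross-intersecting, i.e., every pair in $\mathcal T_2(\mathcal F)$ meets every pair in $\mathcal T_2(\mathcal G)$.
   Context: Families are cross-intersecting if every member of one meets every member of the other. *)

From mathcomp Require Import all_boot.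
Set Implicit Arguments. Unset Strict Implicit. Unset Printing Implicit Defensive.

(* Ground set [n] is 'I_n (elements 0..n-1); families are {set {set 'I_n}}. *)

Definition cross_intersecting (n : nat) (F G : {set {set 'I_n}}) : Prop :=
  forall A B, A \in F -> B \in G -> A :&: B != set0.

Definition uniform (n k : nat) (F : {set {set 'I_n}}) : Prop :=
  forall A, A \in F -> #|A| = k.

Definition T2 (n : nat) (H : {set {set 'I_n}}) : {set {set 'I_n}} :=
  [set P : {set 'I_n} | (#|P| == 2) && [forall A in H, A :&: P != set0]].

(* If P in T2(F) and Q in T2(G) were disjoint, extend Q to a k-set A avoiding
   P, which is possible since n >= k + 2.  A contains Q, so it meets every
   member of G, and saturation puts A in F; but then A must meet P. *)

From mathcomp Require Import all_boot zify.

Lemma subset_extend_card (T : finType) (Q C : {set T}) (m : nat) :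
  Q \subset C -> #|Q| <= m -> m <= #|C| ->
  exists A : {set T}, [/\ Q \subset A, A \subset C & #|A| = m].
Proof.
move=> QC; elim: m => [|m IHm] Qm mC.
  by exists Q; split=> //; apply/eqP; rewrite -leqn0.
have [Qle | Qgt] := leqP #|Q| m; last first.
  by exists Q; split=> //; apply/eqP; rewrite eqn_leq Qm.
have [A [QA AC cardA]] := IHm Qle (ltnW mC).
have : 0 < #|C :\: A| by rewrite cardsD (setIidPr AC) cardA subn_gt0.
case/card_gt0P=> x; rewrite inE => /andP[xA xC].
exists (x |: A); split.
- exact: subset_trans QA (subsetUr _ _).
- by rewrite subUset sub1set xC AC.
- by rewrite cardsU1 xA cardA.
Qed.

Lemma setI_neq0_subset (T : finType) (Q A B : {set T}) :
  Q \subset A -> B :&: Q != set0 -> B :&: A != set0.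
Proof.
move=> QA; apply: contraNN; rewrite -!subset0 => /(subset_trans _); apply.
exact: setIS.
Qed.

Theorem fact4p6 (n k l : nat) (F G : {set {set 'I_n}}) :
  2 <= k -> 2 <= l -> k + l <= n ->
  uniform k F -> uniform l G ->
  cross_intersecting F G ->
  (forall A : {set 'I_n}, #|A| = k ->
     (forall B, B \in G -> A :&: B != set0) -> A \in F) ->
  (forall B : {set 'I_n}, #|B| = l ->
     (forall A, A \in F -> A :&: B != set0) -> B \in G) ->
  cross_intersecting (T2 F) (T2 G).
Proof.
move=> k2 l2 kln _ _ _ satF _ P Q.
rewrite !inE => /andP[/eqP cardP /forallP meetP] /andP[/eqP cardQ /forallP meetQ].
apply: contraT; rewrite negbK setI_eq0 disjoints_subset subsetC => QsubCP.
have [A [QA AsubCP cardA]] : exists A : {set 'I_n},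
    [/\ Q \subset A, A \subset ~: P & #|A| = k].
  apply: subset_extend_card; rewrite // ?cardQ //.
  by move: (cardsC P); rewrite card_ord cardP; lia.
have AF : A \in F.
  apply: satF => // B BG; rewrite setIC.
  by apply: setI_neq0_subset QA _; apply: (implyP (meetQ B)).
have := implyP (meetP A) AF.
by rewrite setI_eq0 disjoints_subset AsubCP.
Qed.
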